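(* Let $n\ge2$ and let $\mathcal V$ be a variety with ternary terms $t_1,\dots,t_{n-1}$ satisfying, for some $l,r:\{1,\dots,n-1\}\to\{x,z\}$, the equations $x=t_1(x,l(1),z)$, $t_h(x,r(h),z)=t_{h+1}(x,l(h+1),z)$ ($1\le h<n-1$), $t_{n-1}(x,r(n-1),z)=z$, and $t_h(x,y,x)=x$ for $1\le h\le n-1$. Then: (i) $\mathcal V$ is $(2n-1)$-modular. (ii)(a) If $l(1)=z$, then $\mathcal V$ is $(2n-2)$-modular, and this holds even if $t_1(x,y,x)=x$ is not assumed. (b) If $r(n-1)=x$, then $\mathcal V$ is $(2n-2)$-modular, even if $t_{n-1}(x,y,x)=x$ is not assumed. (c) If $n\ge3$, $l(1)=z$ and $r(n-1)=x$, then $\mathcal V$ is $(2n-3)$-reversed-modular, even if neither $t_1(x,y,x)=x$ nor $t_{n-1}(x,y,x)=x$ is assumed.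
   Context: Day terms: $4$-ary $u_0,\dots,u_m$ with $u_k(x,y,y,x)=x$ for all $k$, $u_0(x,y,z,w)=x$, $u_m(x,y,z,w)=w$, $u_k(x,x,w,w)=u_{k+1}(x,x,w,w)$ for even $k$, $u_k(x,y,y,w)=u_{k+1}(x,y,y,w)$ for odd $k$ ($0\le k<m$); reversed Day terms: even/odd exchanged in the last two conditions. $m$-modular ($m$-reversed-modular): having Day (reversed Day) terms $u_0,\dots,u_m$. *)

From mathcomp Require Import all_boot.
Set Implicit Arguments. Unset Strict Implicit. Unset Printing Implicit Defensive.

Record signature := Signature { op :> Type; arity : op -> nat }.

Inductive term (S : signature) (X : Type) : Type :=
| Var : X -> term S X
| App : forall o : S, ('I_(arity o) -> term S X) -> term S X.
Arguments Var {S X} _.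
Arguments App {S X} o _.

Record algebra (S : signature) := Algebra {
  carrier :> Type;
  interp : forall o : S, ('I_(arity o) -> carrier) -> carrier }.

Fixpoint eval (S : signature) (A : algebra S) (X : Type) (env : X -> A)
  (t : term S X) : A :=
  match t with
  | Var x => env x
  | App o f => @interp S A o (fun i => eval env (f i))
  end.

(* A variety is given by a set of identities (variables indexed by nat);
   its members are the algebras satisfying all of them (Birkhoff). *)
Definition identities (S : signature) := term S nat * term S nat -> Prop.

Definition model (S : signature) (E : identities S) (A : algebra S) : Prop :=
  forall p, E p -> forall env : nat -> A, eval env p.1 = eval env p.2.

Definition args3 (T : Type) (a b c : T) : 'I_3 -> T :=
  fun i => nth a [:: a; b; c] i.
Definition args4 (T : Type) (a b c d : T) : 'I_4 -> T :=
  fun i => nth a [:: a; b; c; d] i.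

(* The variables x and z, for the functions l, r *)
Inductive xz := VX | VZ.
Definition sel (T : Type) (v : xz) (a c : T) : T :=
  match v with VX => a | VZ => c end.

Definition m_modular (S : signature) (E : identities S) (m : nat) : Prop :=
  exists u : nat -> term S 'I_4,
    forall A : algebra S, model E A -> forall x y z w : A,
      (forall k, k <= m -> eval (args4 x y y x) (u k) = x) /\
      eval (args4 x y z w) (u 0) = x /\
      eval (args4 x y z w) (u m) = w /\
      (forall k, k < m -> ~~ odd k ->
         eval (args4 x x w w) (u k) = eval (args4 x x w w) (u k.+1)) /\
      (forall k, k < m -> odd k ->
         eval (args4 x y y w) (u k) = eval (args4 x y y w) (u k.+1)).

Definition m_reversed_modular (S : signature) (E : identities S) (m : nat) : Prop :=
  exists u : nat -> term S 'I_4,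
    forall A : algebra S, model E A -> forall x y z w : A,
      (forall k, k <= m -> eval (args4 x y y x) (u k) = x) /\
      eval (args4 x y z w) (u 0) = x /\
      eval (args4 x y z w) (u m) = w /\
      (forall k, k < m -> odd k ->
         eval (args4 x x w w) (u k) = eval (args4 x x w w) (u k.+1)) /\
      (forall k, k < m -> ~~ odd k ->
         eval (args4 x y y w) (u k) = eval (args4 x y y w) (u k.+1)).

Definition absorbs (S : signature) (E : identities S) (t : nat -> term S 'I_3)
  (lo hi : nat) : Prop :=
  forall h, lo <= h -> h <= hi ->
    forall A : algebra S, model E A -> forall x y : A,
      eval (args3 x y x) (t h) = x.

(* Write t_h(x,l_h,w) for t_h(x,y,w) if l(h) = x and t_h(x,z,w) if l(h) = z,
   and likewise for r_h.  Then
     x, t_1(x,l_1,w), t_1(x,r_1,w), ..., t_{n-1}(x,l_{n-1},w), t_{n-1}(x,r_{n-1},w), w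
   are Day terms: the two terms of a pair agree under (x,y,y,w) since y = z
   there, the chain equations give the links under (x,x,w,w), and
   t_h(x,y,x) = x makes every term absorbing.  If r(n-1) = x, the last pair can
   be replaced by t_{n-1}(y,l_{n-1},w), w, saving one term; if also l(1) = z,
   the first pair can be replaced by x, t_1(x,r_1,z), which shifts the parity
   of the links.  Case (ii)(a) is case (ii)(b) for the reversed chain
   t_{n-h}(z,y,x). *)
From Stdlib Require Import FunctionalExtensionality.
From mathcomp Require Import all_boot zify.
Set Implicit Arguments. Unset Strict Implicit. Unset Printing Implicit Defensive.

Fixpoint subst (S : signature) (X Y : Type) (t : term S X)
  (f : X -> term S Y) : term S Y :=
  match t with
  | Var x => f x
  | App o g => App o (fun i => subst (g i) f)
  end.

Lemma eval_subst (S : signature) (A : algebra S) (X Y : Type) (e : Y -> A)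
  (t : term S X) (f : X -> term S Y) :
  eval e (subst t f) = eval (fun x => eval e (f x)) t.
Proof.
elim: t => [x|o g IH] //=.
by congr interp; apply: functional_extensionality => i.
Qed.

Definition sub3 (S : signature) (Y : Type) (t : term S 'I_3)
  (a b c : term S Y) : term S Y :=
  subst t (args3 a b c).

Lemma eval_sub3 (S : signature) (A : algebra S) (Y : Type) (e : Y -> A)
  (t : term S 'I_3) (a b c : term S Y) :
  eval e (sub3 t a b c) = eval (args3 (eval e a) (eval e b) (eval e c)) t.
Proof.
rewrite /sub3 eval_subst; congr eval; apply: functional_extensionality.
by case=> [[|[|[|m]]] ?].
Qed.

Lemma sel_id (T : Type) (v : xz) (a : T) : sel v a a = a.
Proof. by case: v. Qed.

Lemma eval_sel (S : signature) (A : algebra S) (Y : Type) (e : Y -> A)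
  (v : xz) (a b : term S Y) :
  eval e (sel v a b) = sel v (eval e a) (eval e b).
Proof. by case: v. Qed.

Section DayChains.
Variables (S : signature) (E : identities S).

Definition vx : term S 'I_4 := Var (@Ordinal 4 0 isT).
Definition vy : term S 'I_4 := Var (@Ordinal 4 1 isT).
Definition vz : term S 'I_4 := Var (@Ordinal 4 2 isT).
Definition vw : term S 'I_4 := Var (@Ordinal 4 3 isT).

Definition absorbing (p : term S 'I_4) : Prop :=
  forall A : algebra S, model E A -> forall x y : A, eval (args4 x y y x) p = x.

Definition link_env (A : Type) (b : bool) (x y w : A) : 'I_4 -> A :=
  if b then args4 x y y w else args4 x x w w.

Definition link (b : bool) (p q : term S 'I_4) : Prop :=
  forall A : algebra S, model E A -> forall x y w : A,
    eval (link_env b x y w) p = eval (link_env b x y w) q.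

Lemma link_trans (b : bool) (p q s : term S 'I_4) :
  link b p q -> link b q s -> link b p s.
Proof. by move=> lpq lqs A HA x y w; rewrite lpq // lqs. Qed.

Fixpoint day_chain (b : bool) (p : term S 'I_4) (s : seq (term S 'I_4)) : Prop :=
  if s is q :: s' then [/\ link b p q, absorbing q & day_chain (~~ b) q s']
  else True.

Lemma day_chain_nth (b : bool) (p d : term S 'I_4) (s : seq (term S 'I_4)) k :
  day_chain b p s -> k < size s ->
  link (b (+) odd k) (nth d (p :: s) k) (nth d (p :: s) k.+1) /\
  absorbing (nth d (p :: s) k.+1).
Proof.
elim: s b p k => [|q s IH] b p [|k] //= [lpq aq chs] lt_ks.
- by rewrite addbF.
- by rewrite addbN -addNb; exact: IH.
Qed.

Lemma day_chain_ends (b : bool) (s : seq (term S 'I_4)) :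
  day_chain b vx s -> last vx s = vw ->
  forall A : algebra S, model E A -> forall x y z w : A,
    (forall k, k <= size s -> eval (args4 x y y x) (nth vx (vx :: s) k) = x) /\
    eval (args4 x y z w) (nth vx (vx :: s) (size s)) = w.
Proof.
move=> chs end_w A HA x y z w; split; last by rewrite (nth_last vx (vx :: s)) /= end_w.
case=> [|k] //= lt_ks; have [_ absorb] := day_chain_nth vx chs lt_ks; exact: absorb.
Qed.

Lemma m_modular_of_day_chain (s : seq (term S 'I_4)) :
  day_chain false vx s -> last vx s = vw -> m_modular E (size s).
Proof.
move=> chs end_w; exists (nth vx (vx :: s)) => A HA x y z w.
have [absorb last_w] := day_chain_ends chs end_w HA x y z w.
split; [exact: absorb | split; [by [] | split; [exact: last_w | split]]]
  => k lt_ks parity_k; have [lk _] := day_chain_nth vx chs lt_ks.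
- by move: (lk A HA x y w); rewrite /link_env /= (negbTE parity_k).
- by move: (lk A HA x y w); rewrite /link_env /= parity_k.
Qed.

Lemma m_reversed_modular_of_day_chain (s : seq (term S 'I_4)) :
  day_chain true vx s -> last vx s = vw -> m_reversed_modular E (size s).
Proof.
move=> chs end_w; exists (nth vx (vx :: s)) => A HA x y z w.
have [absorb last_w] := day_chain_ends chs end_w HA x y z w.
split; [exact: absorb | split; [by [] | split; [exact: last_w | split]]]
  => k lt_ks parity_k; have [lk _] := day_chain_nth vx chs lt_ks.
- by move: (lk A HA x y w); rewrite /link_env /= parity_k.
- by move: (lk A HA x y w); rewrite /link_env /= (negbTE parity_k).
Qed.

Definition blocks (L R : nat -> term S 'I_4) (i k : nat) : seq (term S 'I_4) :=
  flatten [seq [:: L h; R h] | h <- iota i k].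

Lemma size_blocks (L R : nat -> term S 'I_4) i k : size (blocks L R i k) = k.*2.
Proof. by elim: k i => [|k IH] i //=; rewrite IH. Qed.

Lemma day_chain_blocks (L R : nat -> term S 'I_4) i k (s : seq (term S 'I_4)) :
  (forall h, i <= h < i + k -> link false (R h) (L h.+1)) ->
  (forall h, i < h <= i + k ->
     [/\ absorbing (L h), absorbing (R h) & link true (L h) (R h)]) ->
  day_chain false (R (i + k)) s ->
  day_chain false (R i) (blocks L R i.+1 k ++ s).
Proof.
elim: k i => [|k IH] i links pairs chs; first by rewrite addn0 in chs.
have [aL aR lLR] : [/\ absorbing (L i.+1), absorbing (R i.+1) & link true (L i.+1) (R i.+1)].
  by apply: pairs; lia.
have lRL : link false (R i) (L i.+1) by apply: links; lia.
split=> //; split=> //; apply: IH => [h ?|h ?|]; last by rewrite addSnnS.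
- by apply: links; lia.
- by apply: pairs; lia.
Qed.

Definition at4 (t : term S 'I_3) (v : xz) : term S 'I_4 :=
  sub3 t vx (sel v vy vz) vw.

Lemma eval_at4 (A : algebra S) (a b c d : A) (t : term S 'I_3) (v : xz) :
  eval (args4 a b c d) (at4 t v) = eval (args3 a (sel v b c) d) t.
Proof. by rewrite /at4 eval_sub3; case: v. Qed.

Lemma at4_pair (t : term S 'I_3) (v v' : xz) :
  (forall A : algebra S, model E A -> forall x y : A, eval (args3 x y x) t = x) ->
  [/\ absorbing (at4 t v), absorbing (at4 t v') & link true (at4 t v) (at4 t v')].
Proof.
move=> absorb_t; split=> [A HA x y|A HA x y|A HA x y w];
  by rewrite ?/link_env !eval_at4 !sel_id ?absorb_t.
Qed.

End DayChains.
Arguments vx {S}.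
Arguments vy {S}.
Arguments vz {S}.
Arguments vw {S}.

Definition ternary_chain (S : signature) (E : identities S) (n : nat)
  (t : nat -> term S 'I_3) (l r : nat -> xz) : Prop :=
  [/\ forall A : algebra S, model E A -> forall x z : A,
        x = eval (args3 x (sel (l 1) x z) z) (t 1),
      forall h, 1 <= h -> h < n.-1 ->
        forall A : algebra S, model E A -> forall x z : A,
          eval (args3 x (sel (r h) x z) z) (t h)
          = eval (args3 x (sel (l h.+1) x z) z) (t h.+1)
    & forall A : algebra S, model E A -> forall x z : A,
        eval (args3 x (sel (r n.-1) x z) z) (t n.-1) = z].

Section ChainToDayTerms.
Variables (S : signature) (E : identities S) (n : nat)
  (t : nat -> term S 'I_3) (l r : nat -> xz).
Hypothesis n_ge2 : 2 <= n.
Hypothesis chain : ternary_chain E n t l r.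

Local Notation L h := (at4 (t h) (l h)).
Local Notation R h := (at4 (t h) (r h)).

(* [rights0] follows the convention t_0 = x; [rights1] puts t_1(x,r_1,z) in
   place of t_1(x,r_1,w). *)
Definition rights0 (h : nat) : term S 'I_4 := if h is 0 then vx else R h.
Definition right_first : term S 'I_4 := sub3 (t 1) vx (sel (r 1) vy vz) vz.
Definition rights1 (h : nat) : term S 'I_4 := if h is 1 then right_first else R h.
Definition left_last : term S 'I_4 := sub3 (t n.-1) vy (sel (l n.-1) vy vz) vw.

Lemma link_rights0 h : h < n.-1 -> link E false (rights0 h) (L h.+1).
Proof.
have [first step _] := chain.
case: h => [|h] lt_h A HA x y w; rewrite /link_env /= !eval_at4; first exact: first.
exact: step.
Qed.

Lemma link_rights1 h : 1 <= h < n.-1 -> link E false (rights1 h) (L h.+1).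
Proof.
have [_ step _] := chain.
case: h => [|[|h]] // /andP[_ lt_h] A HA x y w; rewrite /link_env /= !eval_at4.
- by rewrite eval_sub3 eval_sel; exact: step.
- exact: step.
Qed.

Lemma day_chain_left_last p :
  r n.-1 = VX -> link E false p (L n.-1) -> day_chain E false p [:: left_last; vw].
Proof.
have [_ _ last] := chain => rX lpL.
have eval_left_last A : model E A -> forall x y c : A,
    eval (args4 x y y c) left_last = c.
  move=> HA x y c; rewrite eval_sub3 eval_sel /= sel_id.
  by move: (last _ HA y c); rewrite rX.
split; [|by move=> A HA x y; apply: eval_left_last|].
- apply: link_trans lpL _ => A HA x y w.
  by rewrite /link_env /= eval_at4 eval_sub3 eval_sel.
- by split=> // A HA x y w; rewrite /link_env eval_left_last.
Qed.

Lemma modular_of_chain : absorbs E t 1 n.-1 -> m_modular E (2 * n - 1).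
Proof.
move=> absorb.
have -> : 2 * n - 1 = size (blocks (fun h => L h) rights0 1 n.-1 ++ [:: vw]).
  by rewrite size_cat size_blocks /=; lia.
apply: m_modular_of_day_chain; last by rewrite last_cat.
apply: (@day_chain_blocks _ _ _ _ 0) => [h ?|[|h] //= ?|].
- by apply: link_rights0; lia.
- by apply: at4_pair; apply: absorb; lia.
- have [_ _ last] := chain.
  have -> : rights0 (0 + n.-1) = R n.-1 by case def_m : n.-1 => //; lia.
  by split=> // A HA x y w; rewrite /link_env eval_at4 last.
Qed.

Lemma modular_of_chain_rx :
  r n.-1 = VX -> absorbs E t 1 (n - 2) -> m_modular E (2 * n - 2).
Proof.
move=> rX absorb.
have -> : 2 * n - 2 = size (blocks (fun h => L h) rights0 1 (n - 2) ++ [:: left_last; vw]).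
  by rewrite size_cat size_blocks /=; lia.
apply: m_modular_of_day_chain; last by rewrite last_cat.
apply: (@day_chain_blocks _ _ _ _ 0) => [h ?|[|h] //= ?|].
- by apply: link_rights0; lia.
- by apply: at4_pair; apply: absorb; lia.
- apply: day_chain_left_last => //; have -> : n.-1 = (n - 2).+1 by lia.
  by apply: link_rights0; lia.
Qed.

Lemma reversed_modular_of_chain : 3 <= n -> l 1 = VZ -> r n.-1 = VX ->
  absorbs E t 2 (n - 2) -> m_reversed_modular E (2 * n - 3).
Proof.
move=> n_ge3 lZ rX absorb; have [first _ _] := chain.
have eval_right_first A : model E A -> forall x y c : A,
    eval (args4 x y y c) right_first = x.
  move=> HA x y c; rewrite eval_sub3 eval_sel /= sel_id.
  by move: (first _ HA x y); rewrite lZ.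
have -> : 2 * n - 3 =
    size (right_first :: blocks (fun h => L h) rights1 2 (n - 3) ++ [:: left_last; vw]).
  by rewrite /= size_cat size_blocks /=; lia.
apply: m_reversed_modular_of_day_chain; last by rewrite /= last_cat.
split=> [A HA x y w|A HA x y|]; rewrite ?/link_env ?eval_right_first //.
apply: (@day_chain_blocks _ _ _ _ 1) => [h ?|[|[|h]] //= ?|].
- by apply: link_rights1; lia.
- by apply: at4_pair; apply: absorb; lia.
- apply: day_chain_left_last => //; have -> : n.-1 = (1 + (n - 3)).+1 by lia.
  by apply: link_rights1; lia.
Qed.

End ChainToDayTerms.

Definition flip3 (S : signature) (t : term S 'I_3) : term S 'I_3 :=
  sub3 t (Var (@Ordinal 3 2 isT)) (Var (@Ordinal 3 1 isT)) (Var (@Ordinal 3 0 isT)).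

Lemma eval_flip3 (S : signature) (A : algebra S) (a b c : A) (t : term S 'I_3) :
  eval (args3 a b c) (flip3 t) = eval (args3 c b a) t.
Proof. by rewrite eval_sub3. Qed.

Definition swap_xz (v : xz) : xz := if v is VX then VZ else VX.

Lemma sel_swap_xz (T : Type) (v : xz) (a b : T) : sel (swap_xz v) a b = sel v b a.
Proof. by case: v. Qed.

Section ReversedChain.
Variables (S : signature) (E : identities S) (n : nat)
  (t : nat -> term S 'I_3) (l r : nat -> xz).

Local Notation t' := (fun h => flip3 (t (n - h))).
Local Notation l' := (fun h => swap_xz (r (n - h))).
Local Notation r' := (fun h => swap_xz (l (n - h))).

Lemma ternary_chain_rev : 2 <= n -> ternary_chain E n t l r -> ternary_chain E n t' l' r'.
Proof.
move=> n_ge2 [first step last]; split=> [A HA x z|h h_ge1 h_lt A HA x z|A HA x z];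
  rewrite !eval_flip3 !sel_swap_xz.
- by rewrite subn1 last.
- have -> : n - h = (n - h.+1).+1 by lia.
  by symmetry; apply: step => //; lia.
- have -> : n - n.-1 = 1 by lia.
  by rewrite -first.
Qed.

Lemma absorbs_rev lo hi : lo <= n -> absorbs E t lo hi -> absorbs E t' (n - hi) (n - lo).
Proof.
by move=> lo_le_n absorb h hi_le lo_le A HA x y; rewrite eval_flip3 absorb //; lia.
Qed.

End ReversedChain.

Lemma modular_of_chain_lz (S : signature) (E : identities S) (n : nat)
  (t : nat -> term S 'I_3) (l r : nat -> xz) :
  2 <= n -> ternary_chain E n t l r ->
  l 1 = VZ -> absorbs E t 2 n.-1 -> m_modular E (2 * n - 2).
Proof.
move=> n_ge2 chain lZ absorb.
apply: (modular_of_chain_rx n_ge2 (ternary_chain_rev n_ge2 chain)).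
- have -> : n - n.-1 = 1 by lia.
  by rewrite lZ.
- have := absorbs_rev n_ge2 absorb.
  by have -> : n - n.-1 = 1 by lia.
Qed.

Theorem corollary7p11 (S : signature) (E : identities S) (n : nat)
  (t : nat -> term S 'I_3) (l r : nat -> xz) :
  2 <= n ->
  (forall A : algebra S, model E A -> forall x z : A,
     x = eval (args3 x (sel (l 1) x z) z) (t 1)) ->
  (forall h, 1 <= h -> h < n.-1 ->
     forall A : algebra S, model E A -> forall x z : A,
       eval (args3 x (sel (r h) x z) z) (t h)
       = eval (args3 x (sel (l h.+1) x z) z) (t h.+1)) ->
  (forall A : algebra S, model E A -> forall x z : A,
     eval (args3 x (sel (r n.-1) x z) z) (t n.-1) = z) ->
  (absorbs E t 1 n.-1 -> m_modular E (2 * n - 1)) /\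
  (l 1 = VZ -> absorbs E t 2 n.-1 -> m_modular E (2 * n - 2)) /\
  (r n.-1 = VX -> absorbs E t 1 (n - 2) -> m_modular E (2 * n - 2)) /\
  (3 <= n -> l 1 = VZ -> r n.-1 = VX -> absorbs E t 2 (n - 2) ->
     m_reversed_modular E (2 * n - 3)).
Proof.
move=> n_ge2 first step last.
have chain : ternary_chain E n t l r by split.
split; [|split; [|split]].
- exact: modular_of_chain n_ge2 chain.
- exact: modular_of_chain_lz n_ge2 chain.
- exact: modular_of_chain_rx n_ge2 chain.
- exact: reversed_modular_of_chain n_ge2 chain.
Qed.
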